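(* Let $\mathcal{M}$ be an $\epsilon$-differentially private mechanism on datasets with $n$ rows. Let $T = T_{A_k}\circ\cdots\circ T_{A_1}$ be a sequence of imputation transformations, one for each attribute $A_1,\ldots,A_k$, where each $T_{A_j}$ replaces all missing entries of attribute $A_j$ by a value computed from its input dataset and leaves all other entries unchanged. Then the composite mechanism $\mathcal{M}\circ T$ is $n\epsilon$-differentially private on incomplete datasets with $n$ rows.
   Context: A randomized mechanism $\mathcal{M}$ is $(\epsilon,\delta)$-DP if for all neighbouring datasets $D,D'$ (same number of rows, differing in exactly one row) and all measurable output sets $Z$, $\Pr[\mathcal{M}(D)\in Z]\le e^{\epsilon}\Pr[\mathcal{M}(D')\in Z]+\delta$; $\epsilon$-DP means $(\epsilon,0)$-DP. Datasets may contain missing cells. *)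

From HB Require Import structures.
From mathcomp Require Import all_boot all_order all_algebra.
From mathcomp Require Import all_classical all_reals all_analysis.
Set Implicit Arguments. Unset Strict Implicit. Unset Printing Implicit Defensive.
Import Order.TTheory GRing.Theory Num.Theory.
Local Open Scope ring_scope.

(* A dataset with n rows and k attributes (columns); each cell holds an
   optional value of type V, [None] meaning a missing cell. *)
Definition dataset (V : Type) (n k : nat) := 'I_n -> 'I_k -> option V.

Definition neighbours (V : Type) (n k : nat) (D D' : dataset V n k) : Prop :=
  exists i : 'I_n, D i <> D' i /\ forall j : 'I_n, j <> i -> D j = D' j.

Definition DP (V : Type) (n k : nat) (R : realType) (d : measure_display)
  (T : measurableType d) (M : dataset V n k -> probability T R) (eps delta : R)
  : Prop :=
  forall D D' : dataset V n k, neighbours D D' ->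
  forall Z : set T, measurable Z ->
    (M D Z <= (expR eps)%:E * M D' Z + delta%:E)%E.

Definition pureDP (V : Type) (n k : nat) (R : realType) (d : measure_display)
  (T : measurableType d) (M : dataset V n k -> probability T R) (eps : R) : Prop :=
  DP M eps 0.

Definition impute (V : Type) (n k : nat) (a : 'I_k) (f : dataset V n k -> V)
  (D : dataset V n k) : dataset V n k :=
  fun r c => if c == a then
               match D r c with None => Some (f D) | Some v => Some v end
             else D r c.

(* T = T_{A_k} o ... o T_{A_1}: impute attribute 0 first, then 1, ..., k-1,
   where f a is the imputation rule of attribute a. *)
Definition impute_all (V : Type) (n k : nat) (f : 'I_k -> dataset V n k -> V)
  (D : dataset V n k) : dataset V n k :=
  foldl (fun D' a => impute a (f a) D') D (enum 'I_k).

From HB Require Import structures.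
From mathcomp Require Import all_boot all_order all_algebra.
From mathcomp Require Import all_classical all_reals all_analysis.
Set Implicit Arguments. Unset Strict Implicit.
Import Order.TTheory GRing.Theory Num.Theory.
Local Open Scope ring_scope.

(* Imputation may rewrite every row, so nothing about [impute_all] matters
   beyond its type. Any two datasets with n rows are joined by a chain of n
   hybrids, replacing one row at a time, each step an equality or a neighbour
   pair; group privacy along the chain gives the factor exp(n eps). *)

Section Hybrid.
Variables (V : Type) (n k : nat).
Implicit Types E F : dataset V n k.

Definition hybrid E F (m : nat) : dataset V n k :=
  fun r => if (r < m)%N then F r else E r.

Lemma hybrid0 E F : hybrid E F 0 = E.
Proof. by apply: funext => r; rewrite /hybrid ltn0. Qed.

Lemma hybrid_full E F : hybrid E F n = F.
Proof. by apply: funext => r; rewrite /hybrid ltn_ord. Qed.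

Lemma hybrid_neq_row E F m (r : 'I_n) :
  hybrid E F m r <> hybrid E F m.+1 r -> val r = m.
Proof. by rewrite /hybrid ltnS; case: ltngtP. Qed.

Lemma hybridS_eq_or_neighbours E F m :
  hybrid E F m = hybrid E F m.+1 \/
  neighbours (hybrid E F m) (hybrid E F m.+1).
Proof.
have [->|neq] := pselect (hybrid E F m = hybrid E F m.+1); [by left | right].
have [i neq_i] : exists i, hybrid E F m i <> hybrid E F m.+1 i.
  apply: contra_notP neq => all_eq; apply: funext => i.
  by apply: contra_notP all_eq; exists i.
exists i; split => // j; apply: contra_notP => neq_j.
by apply: val_inj; rewrite (hybrid_neq_row neq_j) (hybrid_neq_row neq_i).
Qed.

End Hybrid.

Section GroupPrivacy.
Variables (V : Type) (n k : nat) (R : realType) (d : measure_display).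
Variables (T : measurableType d) (M : dataset V n k -> probability T R).
Variable eps : R.
Hypothesis M_DP : pureDP M eps.

Lemma pureDP_ge0 (D D' : dataset V n k) : neighbours D D' -> 0 <= eps.
Proof.
move=> DD'; rewrite leNgt; apply/negP => eps_lt0.
have := M_DP DD' measurableT.
by rewrite !probability_setT adde0 mule1 lee_fin leNgt expR_lt1 eps_lt0.
Qed.

Lemma pureDP_le_eq_or_neighbours (D D' : dataset V n k) (Z : set T) :
  0 <= eps -> measurable Z -> D = D' \/ neighbours D D' ->
  (M D Z <= (expR eps)%:E * M D' Z)%E.
Proof.
move=> eps_ge0 mZ [<-|DD'].
  by rewrite -{1}[M D Z]mul1e lee_wpmul2r // lee_fin leNgt expR_lt1 -leNgt.
by have := M_DP DD' mZ; rewrite adde0.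
Qed.

Lemma pureDP_group (D D' : dataset V n k) (Z : set T) :
  0 <= eps -> measurable Z -> (M D Z <= (expR (n%:R * eps))%:E * M D' Z)%E.
Proof.
move=> eps_ge0 mZ; rewrite -(hybrid_full D D').
elim: {1 3}n => [|m IH]; first by rewrite mul0r expR0 mul1e hybrid0.
apply: (le_trans IH).
rewrite -natr1 mulrDl mul1r expRD EFinM -muleA lee_wpmul2l ?lee_fin ?expR_ge0 //.
exact/pureDP_le_eq_or_neighbours/hybridS_eq_or_neighbours.
Qed.

Lemma pureDP_comp (g : dataset V n k -> dataset V n k) :
  pureDP (fun D => M (g D)) (n%:R * eps).
Proof.
move=> D D' DD' Z mZ; rewrite adde0.
exact/pureDP_group/mZ/(pureDP_ge0 DD').
Qed.

End GroupPrivacy.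

Theorem theorem2 (V : Type) (n k : nat) (R : realType) (d : measure_display)
  (T : measurableType d) (M : dataset V n k -> probability T R) (eps : R)
  (f : 'I_k -> dataset V n k -> V) :
  pureDP M eps ->
  pureDP (fun D => M (impute_all f D)) (n%:R * eps).
Proof. by move=> M_DP; exact: pureDP_comp. Qed.
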